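(* There is a decreasing sequence $\kappa_m\ge\kappa^*:=\kappa^*(e_0)>0$ such that for every $m>j\ge3$, $$\rho_{k_j}<\sigma_m(\rho_{k_j})-\rho_{k_j}\kappa_m.$$ In particular, $\rho_{k_j}<\sigma_\infty(\rho_{k_j})-\rho_{k_j}\kappa^*$.
   Context: Ellipse with semi-axes $0<b\le a$, eccentricity $e_0=\sqrt{1-b^2/a^2}$ with $0<e_0<1$. For $0\le k<1$, $F(\varphi;k)=\int_0^\varphi(1-k^2\sin^2\tau)^{-1/2}d\tau$, $K(k)=F(\pi/2;k)$. For $\lambda\in(0,b)$, $k_\lambda=\sqrt{(a^2-b^2)/(a^2-\lambda^2)}$, $\omega_\lambda=F(\arcsin(\lambda/b);k_\lambda)/(2K(k_\lambda))$ (strictly increasing from $0$ to $1/2$); for $q\ge3$, $\omega_{\lambda_q}=1/q$ and $k_q=k_{\lambda_q}\in(e_0,1)$, strictly decreasing in $q$ with $k_q\to e_0$. $\rho_{k}=\mathrm{arcosh}(1/k)$. For $m>j\ge3$, $\sigma_m(\rho_{k_j})=\frac{2\pi}{4K(k_m)}\int_0^{\rho_{k_j}}\frac{dt}{\sqrt{1-k_m^2\cosh^2t}}$, and $\sigma_\infty(\rho_{k_j})=\frac{2\pi}{4K(e_0)}\int_0^{\rho_{k_j}}\frac{dt}{\sqrt{1-e_0^2\cosh^2t}}$. *)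

From Stdlib Require Import Reals.
From Coquelicot Require Import Coquelicot.
Open Scope R_scope.

Definition ellF (phi k : R) : R :=
  RInt (fun tau => / sqrt (1 - k ^ 2 * (sin tau) ^ 2)) 0 phi.

Definition ellK (k : R) : R := ellF (PI / 2) k.

Definition ecc (a b : R) : R := sqrt (1 - b ^ 2 / a ^ 2).

Definition k_lam (a b lam : R) : R := sqrt ((a ^ 2 - b ^ 2) / (a ^ 2 - lam ^ 2)).

Definition omega (a b lam : R) : R :=
  ellF (asin (lam / b)) (k_lam a b lam) / (2 * ellK (k_lam a b lam)).

Definition is_lambda_q (a b : R) (q : nat) (lam : R) : Prop :=
  0 < lam < b /\ omega a b lam = / INR q.

Definition arcosh (x : R) : R := ln (x + sqrt (x ^ 2 - 1)).

Definition rho (k : R) : R := arcosh (/ k).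

(* sigma with modulus kk: (2 pi / (4 K(kk))) int_0^r dt / sqrt(1 - kk^2 cosh^2 t).
   sigma_m uses kk = k_m, sigma_infinity uses kk = e0. *)
Definition sigma_k (kk r : R) : R :=
  2 * PI / (4 * ellK kk) * RInt (fun t => / sqrt (1 - kk ^ 2 * (cosh t) ^ 2)) 0 r.

(** For [k_m < k < 1] and [r = rho k], i.e. [cosh r = 1/k], the integrand of [sigma_m] is at
    least [1/k_m'] on [[0, r]], where [k' = sqrt (1 - k^2)]; hence
    [sigma_m(r) >= r * rate(k_m)] with [rate(k) = (PI/2) / (k' K(k))]. Comparing integrands,
    [k' K(k)] is nonincreasing in [k] and strictly below [PI/2] for [k > 0], so [rate] is
    nondecreasing and exceeds [1]. Taking [kappa_m = (rate(k_m) - 1)/2] and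
    [kappa* = (rate(e0) - 1)/2], everything follows once [k_m] is known to decrease strictly in
    [m] and to stay above [e0], which is [k_lambda] at [lambda = 0].
    The latter follows from [omega] being nondecreasing in [lambda]: by the addition formula
    [F(phi) + F(psi) = K] for [k' tan phi tan psi = 1],
    [omega = (1 - F(psi_lambda; k_lambda) / K(k_lambda)) / 2], where [psi_lambda] decreases
    with [lambda] and [F(psi; k) / K(k)] decreases in [k] because the ratio of the integrands
    for two moduli is monotone in the variable of integration. *)

From Stdlib Require Import Reals Lra Psatz.
From Coquelicot Require Import Coquelicot.
Open Scope R_scope.

Lemma RInt_scal_R (f : R -> R) (c a b : R) :
  ex_RInt f a b -> RInt (fun x => c * f x) a b = c * RInt f a b.
Proof. exact (RInt_scal f a b c). Qed.

Lemma ex_RInt_scal_R (f : R -> R) (c a b : R) :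
  ex_RInt f a b -> ex_RInt (fun x => c * f x) a b.
Proof. exact (ex_RInt_scal f a b c). Qed.

Lemma RInt_Chasles_R (f : R -> R) (a b c : R) :
  ex_RInt f a b -> ex_RInt f b c -> RInt f a b + RInt f b c = RInt f a c.
Proof. exact (RInt_Chasles f a b c). Qed.

Lemma RInt_const_R (c a b : R) : RInt (fun _ => c) a b = (b - a) * c.
Proof. exact (RInt_const a b c). Qed.

Lemma Rdiv_le_div_cross a b c d : 0 < b -> 0 < d -> a * d <= c * b -> a / b <= c / d.
Proof.
  intros Hb Hd H. apply (Rmult_le_reg_r (b * d)); [nra |].
  replace (a / b * (b * d)) with (a * d) by (field; lra).
  replace (c / d * (b * d)) with (c * b) by (field; lra).
  easy.
Qed.

Lemma Rinv_sqrt_le_contravar x y : 0 < x -> x <= y -> / sqrt y <= / sqrt x.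
Proof.
  intros Hx Hxy. apply Rinv_le_contravar.
  - now apply sqrt_lt_R0.
  - now apply sqrt_le_1_alt.
Qed.

Lemma atan_le x y : x <= y -> atan x <= atan y.
Proof. intros [Hlt | ->]; [now left; apply atan_increasing | lra]. Qed.

Lemma sin_pow2_le_1 t : sin t ^ 2 <= 1.
Proof. pose proof (SIN_bound t). nra. Qed.

(** * Elliptic integrals *)

Definition ell_integrand (k t : R) : R := / sqrt (1 - k ^ 2 * sin t ^ 2).

Lemma ellF_RInt phi k : ellF phi k = RInt (ell_integrand k) 0 phi.
Proof. reflexivity. Qed.

Lemma ellK_RInt k : ellK k = RInt (ell_integrand k) 0 (PI / 2).
Proof. reflexivity. Qed.

Lemma ell_radicand_pos k t : k ^ 2 < 1 -> 0 < 1 - k ^ 2 * sin t ^ 2.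
Proof. intros Hk. pose proof (sin_pow2_le_1 t). pose proof (pow2_ge_0 (sin t)). nra. Qed.

Lemma ell_integrand_ge_1 k t : k ^ 2 < 1 -> 1 <= ell_integrand k t.
Proof.
  intros Hk. unfold ell_integrand. rewrite <- Rinv_1 at 1; rewrite <- sqrt_1 at 1.
  apply Rinv_sqrt_le_contravar; [now apply ell_radicand_pos |].
  pose proof (pow2_ge_0 (sin t)). pose proof (pow2_ge_0 k). nra.
Qed.

Lemma ell_integrand_pos k t : k ^ 2 < 1 -> 0 < ell_integrand k t.
Proof. intros Hk. pose proof (ell_integrand_ge_1 k t Hk). lra. Qed.

Lemma ell_integrand_continuous k t : k ^ 2 < 1 -> continuous (ell_integrand k) t.
Proof.
  intros Hk. apply (ex_derive_continuous (V := R_NormedModule)).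
  pose proof (ell_radicand_pos k t Hk) as Hrad.
  unfold ell_integrand. auto_derive. simpl in Hrad |- *.
  split; [lra | split; [apply Rgt_not_eq, sqrt_lt_R0; lra | easy]].
Qed.

Lemma ex_RInt_ell_integrand k a b : k ^ 2 < 1 -> ex_RInt (ell_integrand k) a b.
Proof.
  intros Hk. apply (ex_RInt_continuous (V := R_CompleteNormedModule)).
  intros t _. now apply ell_integrand_continuous.
Qed.

Lemma ellF_le k x y : k ^ 2 < 1 -> 0 <= x <= y -> ellF x k <= ellF y k.
Proof.
  intros Hk Hxy. rewrite !ellF_RInt.
  rewrite <- (RInt_Chasles_R _ 0 x y) by now apply ex_RInt_ell_integrand.
  enough (0 <= RInt (ell_integrand k) x y) by lra.
  apply RInt_ge_0; [lra | now apply ex_RInt_ell_integrand |].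
  intros t _. now left; apply ell_integrand_pos.
Qed.

Lemma ellK_ge_PI2 k : k ^ 2 < 1 -> PI / 2 <= ellK k.
Proof.
  intros Hk. pose proof PI_RGT_0.
  replace (PI / 2) with (RInt (fun _ => 1) 0 (PI / 2)) by (rewrite RInt_const_R; lra).
  apply RInt_le; [lra | apply ex_RInt_const | now apply ex_RInt_ell_integrand |].
  intros t _. now apply ell_integrand_ge_1.
Qed.

(* If [g / f] is nondecreasing, the share of [g] on an initial segment [[a, b]] of [[a, c]]
   is at most that of [f]. *)
Lemma RInt_initial_share_le (f g : R -> R) (a b c : R) :
  a <= b <= c -> ex_RInt f a c -> ex_RInt g a c ->
  (forall x, a <= x <= c -> 0 < f x /\ 0 < g x) ->
  (forall s t, a <= s <= t -> t <= c -> g s * f t <= g t * f s) ->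
  RInt g a b * RInt f a c <= RInt f a b * RInt g a c.
Proof.
  intros Hb Hf Hg Hpos Hmono.
  pose proof (ex_RInt_Chasles_1 (V := R_CompleteNormedModule) f a b c Hb Hf) as Hf1.
  pose proof (ex_RInt_Chasles_2 (V := R_CompleteNormedModule) f a b c Hb Hf) as Hf2.
  pose proof (ex_RInt_Chasles_1 (V := R_CompleteNormedModule) g a b c Hb Hg) as Hg1.
  pose proof (ex_RInt_Chasles_2 (V := R_CompleteNormedModule) g a b c Hb Hg) as Hg2.
  rewrite <- (RInt_Chasles_R f a b c), <- (RInt_Chasles_R g a b c) by easy.
  destruct (Hpos b ltac:(lra)) as [Hfb Hgb].
  assert (HA : f b * RInt g a b <= g b * RInt f a b).
  { rewrite <- !RInt_scal_R by easy.
    apply RInt_le; [lra | now apply ex_RInt_scal_R .. |].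
    intros x Hx. rewrite Rmult_comm. apply Hmono; lra. }
  assert (HB : g b * RInt f b c <= f b * RInt g b c).
  { rewrite <- !RInt_scal_R by easy.
    apply RInt_le; [lra | now apply ex_RInt_scal_R .. |].
    intros x Hx. rewrite (Rmult_comm (f b)). apply Hmono; lra. }
  assert (0 <= RInt f a b) by (apply RInt_ge_0; [lra | easy | intros; left; apply Hpos; lra]).
  assert (0 <= RInt g a b) by (apply RInt_ge_0; [lra | easy | intros; left; apply Hpos; lra]).
  assert (0 <= RInt f b c) by (apply RInt_ge_0; [lra | easy | intros; left; apply Hpos; lra]).
  assert (0 <= RInt g b c) by (apply RInt_ge_0; [lra | easy | intros; left; apply Hpos; lra]).
  assert (Hprod : RInt g a b * RInt f b c <= RInt f a b * RInt g b c).
  { apply (Rmult_le_reg_l (f b * g b)); [nra |].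
    replace (f b * g b * (RInt g a b * RInt f b c))
      with ((f b * RInt g a b) * (g b * RInt f b c)) by ring.
    replace (f b * g b * (RInt f a b * RInt g b c))
      with ((g b * RInt f a b) * (f b * RInt g b c)) by ring.
    apply Rmult_le_compat; nra. }
  nra.
Qed.

Lemma ell_integrand_ratio_le k1 k2 s t :
  k1 ^ 2 <= k2 ^ 2 -> k2 ^ 2 < 1 -> 0 <= s <= t -> t <= PI / 2 ->
  ell_integrand k2 s * ell_integrand k1 t <= ell_integrand k2 t * ell_integrand k1 s.
Proof.
  intros Hk12 Hk2 Hst Ht. pose proof PI_RGT_0.
  assert (Hsin : sin s ^ 2 <= sin t ^ 2).
  { assert (0 <= sin s) by (apply sin_ge_0; lra).
    assert (sin s <= sin t) by (apply sin_incr_1; lra).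
    nra. }
  assert (Hk1 : k1 ^ 2 < 1) by lra.
  pose proof (ell_radicand_pos k1 s Hk1). pose proof (ell_radicand_pos k1 t Hk1).
  pose proof (ell_radicand_pos k2 s Hk2). pose proof (ell_radicand_pos k2 t Hk2).
  pose proof (pow2_ge_0 (sin s)).
  unfold ell_integrand. rewrite <- !Rinv_mult, <- !sqrt_mult by lra.
  apply Rinv_sqrt_le_contravar; nra.
Qed.

Lemma ellF_div_ellK_anti k1 k2 psi :
  k1 ^ 2 <= k2 ^ 2 -> k2 ^ 2 < 1 -> 0 <= psi <= PI / 2 ->
  ellF psi k2 / ellK k2 <= ellF psi k1 / ellK k1.
Proof.
  intros Hk12 Hk2 Hpsi. assert (Hk1 : k1 ^ 2 < 1) by lra.
  pose proof (ellK_ge_PI2 k1 Hk1). pose proof (ellK_ge_PI2 k2 Hk2). pose proof PI_RGT_0.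
  apply Rdiv_le_div_cross; [lra | lra |].
  apply RInt_initial_share_le; [lra | now apply ex_RInt_ell_integrand .. | |].
  - intros x _. split; now apply ell_integrand_pos.
  - intros s t Hst Ht. now apply ell_integrand_ratio_le.
Qed.

(* The complementary amplitude: [k' tan phi tan (ell_complement k phi) = 1]. *)
Definition ell_complement (k phi : R) : R := PI / 2 - atan (sqrt (1 - k ^ 2) * tan phi).

Lemma ell_radicand_complement k x : k ^ 2 < 1 -> cos x <> 0 ->
  1 - k ^ 2 * sin (ell_complement k x) ^ 2 = (1 - k ^ 2) / (1 - k ^ 2 * sin x ^ 2).
Proof.
  intros Hk Hc. pose proof (ell_radicand_pos k x Hk) as HD.
  assert (Hpyth : sin x ^ 2 + cos x ^ 2 = 1) by (rewrite <- (sin2_cos2 x); unfold Rsqr; ring).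
  unfold ell_complement. rewrite sin_shift, cos_atan.
  set (u := sqrt (1 - k ^ 2) * tan x).
  assert (Hu : 1 + u² = (1 - k ^ 2 * sin x ^ 2) / cos x ^ 2).
  { unfold u, tan. rewrite Rsqr_mult, Rsqr_sqrt by lra. unfold Rsqr.
    field_simplify_eq; [nra | easy]. }
  assert (Hu_pos : 0 < 1 + u²) by (pose proof (Rle_0_sqr u); lra).
  replace ((1 / sqrt (1 + u²)) ^ 2) with (/ (1 + u²))
    by (unfold Rdiv; rewrite Rmult_1_l, pow_inv, pow2_sqrt; lra).
  rewrite Hu. field_simplify_eq; [nra | repeat split; try easy; lra].
Qed.

Lemma ell_integrand_complement_chain k x : k ^ 2 < 1 -> cos x <> 0 ->
  - sqrt (1 - k ^ 2) / (1 - k ^ 2 * sin x ^ 2) * ell_integrand k (ell_complement k x)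
  = - ell_integrand k x.
Proof.
  intros Hk Hc. pose proof (ell_radicand_pos k x Hk) as HD.
  assert (0 < sqrt (1 - k ^ 2)) by (apply sqrt_lt_R0; lra).
  assert (0 < sqrt (1 - k ^ 2 * sin x ^ 2)) by now apply sqrt_lt_R0.
  assert (Hsq : sqrt (1 - k ^ 2 * sin x ^ 2) * sqrt (1 - k ^ 2 * sin x ^ 2)
                = 1 - k ^ 2 * sin x ^ 2) by (apply sqrt_sqrt; lra).
  unfold ell_integrand. rewrite ell_radicand_complement, sqrt_div_alt by easy.
  rewrite <- Hsq at 1. field. lra.
Qed.

Lemma is_derive_ell_complement k x : k ^ 2 < 1 -> cos x <> 0 ->
  is_derive (ell_complement k) x (- sqrt (1 - k ^ 2) / (1 - k ^ 2 * sin x ^ 2)).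
Proof.
  intros Hk Hc. pose proof (ell_radicand_pos k x Hk) as HD.
  assert (Hpyth : sin x ^ 2 + cos x ^ 2 = 1) by (rewrite <- (sin2_cos2 x); unfold Rsqr; ring).
  assert (Hsq : sqrt (1 - k ^ 2) * sqrt (1 - k ^ 2) = 1 - k ^ 2) by (apply sqrt_sqrt; lra).
  unfold ell_complement, tan. auto_derive; [easy |].
  change (k * (k * 1)) with (k ^ 2). set (K := sqrt (1 - k ^ 2)) in *.
  assert (Hden : cos x * cos x + K * sin x * (K * sin x) = 1 - k ^ 2 * sin x ^ 2).
  { replace (K * sin x * (K * sin x)) with (K * K * sin x ^ 2) by ring. rewrite Hsq. nra. }
  field_simplify_eq; [| rewrite Hden; repeat split; try easy; nra].
  replace (K ^ 3) with (K * (K * K)) by ring. rewrite Hsq.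
  replace (cos x ^ 2) with (1 - sin x ^ 2) by lra. ring.
Qed.

Lemma ellF_add_complement k phi : k ^ 2 < 1 -> - (PI / 2) < phi < PI / 2 ->
  ellF phi k + ellF (ell_complement k phi) k = ellK k.
Proof.
  intros Hk Hphi. pose proof PI_RGT_0.
  set (f := ell_integrand k). set (psi := ell_complement k phi).
  set (dg := fun x => - sqrt (1 - k ^ 2) / (1 - k ^ 2 * sin x ^ 2)).
  assert (Hint : forall u v, ex_RInt f u v) by (intros; now apply ex_RInt_ell_integrand).
  assert (Hcos : forall x, Rmin 0 phi <= x <= Rmax 0 phi -> cos x <> 0).
  { intros x Hx. apply Rgt_not_eq, cos_gt_0;
      [apply (Rlt_le_trans _ (Rmin 0 phi)) | apply (Rle_lt_trans _ (Rmax 0 phi))];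
      try apply Rmin_glb_lt; try apply Rmax_lub_lt; lra. }
  assert (Hdg : forall x, Rmin 0 phi <= x <= Rmax 0 phi ->
            is_derive (ell_complement k) x (dg x) /\ continuous dg x).
  { intros x Hx. split; [now apply is_derive_ell_complement, Hcos |].
    apply (ex_derive_continuous (V := R_NormedModule)).
    pose proof (ell_radicand_pos k x Hk) as HD. unfold dg. auto_derive. simpl in HD. lra. }
  assert (Hsubst := RInt_comp (V := R_CompleteNormedModule) f (ell_complement k) dg 0 phi
                      (fun x _ => ell_integrand_continuous k _ Hk) Hdg).
  assert (Hg0 : ell_complement k 0 = PI / 2).
  { unfold ell_complement. rewrite tan_0, Rmult_0_r, atan_0. lra. }
  assert (Hflip : RInt (fun x => - f x) 0 phi = RInt f (PI / 2) psi).
  { rewrite <- Hg0. etransitivity; [| exact Hsubst]. apply RInt_ext. intros x Hx.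
    symmetry. apply ell_integrand_complement_chain; [easy | apply Hcos; lra]. }
  assert (Hopp : RInt (fun x => - f x) 0 phi = - RInt f 0 phi)
    by exact (RInt_opp f 0 phi (Hint _ _)).
  assert (Hswap : RInt f (PI / 2) psi = - RInt f psi (PI / 2))
    by exact (eq_sym (opp_RInt_swap f psi (PI / 2) (Hint _ _))).
  rewrite ellK_RInt, !ellF_RInt. fold f psi.
  rewrite <- (RInt_Chasles_R f 0 psi (PI / 2)) by apply Hint.
  rewrite Hopp, Hswap in Hflip. lra.
Qed.

(** * The moduli [k_lambda] and the function [omega] *)

Lemma k_lam_sq a b l : 0 < b < a -> 0 <= l < b ->
  k_lam a b l ^ 2 = (a ^ 2 - b ^ 2) / (a ^ 2 - l ^ 2).
Proof. intros Hab Hl. apply pow2_sqrt, Rdiv_le_0_compat; nra. Qed.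

Lemma k_lam_pos a b l : 0 < b < a -> 0 <= l < b -> 0 < k_lam a b l.
Proof. intros Hab Hl. apply sqrt_lt_R0, Rdiv_lt_0_compat; nra. Qed.

Lemma k_lam_lt_1 a b l : 0 < b < a -> 0 <= l < b -> k_lam a b l < 1.
Proof.
  intros Hab Hl. rewrite <- sqrt_1. apply sqrt_lt_1_alt.
  split; [apply Rdiv_le_0_compat | apply Rlt_div_l]; nra.
Qed.

Lemma k_lam_sq_lt_1 a b l : 0 < b < a -> 0 <= l < b -> k_lam a b l ^ 2 < 1.
Proof. intros Hab Hl. rewrite k_lam_sq by easy. apply Rlt_div_l; nra. Qed.

Lemma k_lam_lt a b l1 l2 : 0 < b < a -> 0 <= l1 < l2 -> l2 < b ->
  k_lam a b l1 < k_lam a b l2.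
Proof.
  intros Hab Hl Hl2. apply sqrt_lt_1_alt. split; [apply Rdiv_le_0_compat; nra |].
  apply Rmult_lt_compat_l; [nra |].
  apply Rinv_lt_contravar; [apply Rmult_lt_0_compat |]; nra.
Qed.

Lemma k_lam_le a b l1 l2 : 0 < b < a -> 0 <= l1 <= l2 -> l2 < b ->
  k_lam a b l1 <= k_lam a b l2.
Proof.
  intros Hab [Hl1 [Hlt | <-]] Hl2; [left; apply k_lam_lt; lra | lra].
Qed.

Lemma ecc_eq_k_lam_0 a b : 0 < a -> ecc a b = k_lam a b 0.
Proof. intros Ha. unfold ecc, k_lam. f_equal. field. lra. Qed.

Lemma ell_complement_k_lam_asin a b l : 0 < b < a -> 0 <= l < b ->
  ell_complement (k_lam a b l) (asin (l / b)) = PI / 2 - atan (l / sqrt (a ^ 2 - l ^ 2)).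
Proof.
  intros Hab Hl. unfold ell_complement. do 2 f_equal.
  assert (Hlb : -1 <= l / b <= 1).
  { split; [apply (Rle_trans _ 0); [lra | apply Rdiv_le_0_compat; lra] | apply Rle_div_l; lra]. }
  rewrite tan_asin by easy.
  replace (1 - k_lam a b l ^ 2) with ((b ^ 2 - l ^ 2) / (a ^ 2 - l ^ 2))
    by (rewrite k_lam_sq by easy; field; nra).
  replace (1 - (l / b)²) with ((b ^ 2 - l ^ 2) / b ^ 2) by (unfold Rsqr; field; lra).
  assert (0 < sqrt (b ^ 2 - l ^ 2)) by (apply sqrt_lt_R0; nra).
  assert (0 < sqrt (a ^ 2 - l ^ 2)) by (apply sqrt_lt_R0; nra).
  rewrite !sqrt_div_alt, sqrt_pow2 by nra.
  field. lra.
Qed.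

Lemma omega_complement a b l : 0 < b < a -> 0 <= l < b ->
  omega a b l
  = (1 - ellF (PI / 2 - atan (l / sqrt (a ^ 2 - l ^ 2))) (k_lam a b l) / ellK (k_lam a b l)) / 2.
Proof.
  intros Hab Hl. pose proof (k_lam_sq_lt_1 a b l Hab Hl) as Hk.
  assert (Hphi : - (PI / 2) < asin (l / b) < PI / 2).
  { apply asin_bound_lt. split; [apply (Rlt_le_trans _ 0); [lra | apply Rdiv_le_0_compat; lra]
                               | apply Rlt_div_l; lra]. }
  pose proof (ellF_add_complement _ _ Hk Hphi) as Hadd.
  rewrite ell_complement_k_lam_asin in Hadd by easy.
  pose proof (ellK_ge_PI2 _ Hk). pose proof PI_RGT_0.
  unfold omega.
  replace (ellF (asin (l / b)) (k_lam a b l))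
    with (ellK (k_lam a b l) - ellF (PI / 2 - atan (l / sqrt (a ^ 2 - l ^ 2))) (k_lam a b l))
    by lra.
  field. lra.
Qed.

Lemma omega_le a b l1 l2 : 0 < b < a -> 0 <= l1 <= l2 -> l2 < b ->
  omega a b l1 <= omega a b l2.
Proof.
  intros Hab Hl Hl2. rewrite !omega_complement by lra.
  set (k1 := k_lam a b l1). set (k2 := k_lam a b l2).
  set (u1 := l1 / sqrt (a ^ 2 - l1 ^ 2)). set (u2 := l2 / sqrt (a ^ 2 - l2 ^ 2)).
  assert (Hk12 : k1 ^ 2 <= k2 ^ 2).
  { apply pow_incr. split; [left; apply k_lam_pos | apply k_lam_le]; lra. }
  assert (Hk2 : k2 ^ 2 < 1) by (apply k_lam_sq_lt_1; lra).
  assert (Hu : 0 <= u1 <= u2).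
  { assert (0 < sqrt (a ^ 2 - l2 ^ 2)) by (apply sqrt_lt_R0; nra).
    assert (sqrt (a ^ 2 - l2 ^ 2) <= sqrt (a ^ 2 - l1 ^ 2)) by (apply sqrt_le_1_alt; nra).
    split; [apply Rdiv_le_0_compat; lra |].
    apply Rmult_le_compat; [lra | left; apply Rinv_0_lt_compat; lra | lra |].
    now apply Rinv_le_contravar. }
  assert (Hpsi : 0 <= PI / 2 - atan u2 <= PI / 2 - atan u1 /\ PI / 2 - atan u1 <= PI / 2).
  { pose proof (atan_bound u2). pose proof (atan_le 0 u1 (proj1 Hu)).
    pose proof (atan_le u1 u2 (proj2 Hu)). rewrite atan_0 in *. lra. }
  pose proof (ellK_ge_PI2 k2 Hk2). pose proof PI_RGT_0.
  enough (ellF (PI / 2 - atan u2) k2 / ellK k2 <= ellF (PI / 2 - atan u1) k1 / ellK k1) by lra.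
  apply (Rle_trans _ (ellF (PI / 2 - atan u1) k2 / ellK k2)).
  - apply Rmult_le_compat_r; [left; apply Rinv_0_lt_compat; lra |].
    apply ellF_le; [easy | lra].
  - apply ellF_div_ellK_anti; [easy | easy | lra].
Qed.

Lemma is_lambda_q_lt a b j m lj lm : 0 < b < a -> (0 < j)%nat -> (j < m)%nat ->
  is_lambda_q a b j lj -> is_lambda_q a b m lm -> lm < lj.
Proof.
  intros Hab Hj Hjm [Hlj Hoj] [Hlm Hom].
  destruct (Rlt_or_le lm lj) as [Hlt | Hle]; [easy | exfalso].
  pose proof (omega_le a b lj lm Hab ltac:(lra) ltac:(lra)) as Homega.
  rewrite Hoj, Hom in Homega.
  assert (0 < INR j) by (apply lt_0_INR; lia).
  assert (INR j < INR m) by (apply lt_INR; lia).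
  assert (/ INR m < / INR j) by (apply Rinv_lt_contravar; nra).
  lra.
Qed.

(** * Lower bound for [sigma] *)

Lemma cosh_le s t : 0 <= s <= t -> cosh s <= cosh t.
Proof.
  intros Hst. unfold cosh. rewrite !exp_Ropp.
  set (X := exp s). set (Y := exp t).
  assert (HX : 1 <= X) by (pose proof (exp_ineq1_le s); unfold X; lra).
  assert (HXY : X <= Y).
  { unfold X, Y. destruct (Rle_lt_or_eq_dec s t) as [Hlt | ->]; [lra | now left; apply exp_increasing | lra]. }
  assert (Hdiff : / X - / Y = (Y - X) * / (X * Y)) by (field; lra).
  assert (/ (X * Y) <= 1) by (rewrite <- Rinv_1; apply Rinv_le_contravar; nra).
  nra.
Qed.

Lemma cosh_ge_1 t : 0 <= t -> 1 <= cosh t.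
Proof. intros Ht. rewrite <- cosh_0. apply cosh_le. lra. Qed.

Lemma rho_pos k : 0 < k < 1 -> 0 < rho k.
Proof.
  intros Hk. unfold rho, arcosh. rewrite <- ln_1. apply ln_increasing; [lra |].
  assert (1 < / k) by (rewrite <- Rinv_1; apply Rinv_lt_contravar; lra).
  pose proof (sqrt_pos ((/ k) ^ 2 - 1)). lra.
Qed.

Lemma cosh_rho k : 0 < k < 1 -> cosh (rho k) = / k.
Proof.
  intros Hk. unfold rho, arcosh.
  set (x := / k). set (s := sqrt (x ^ 2 - 1)).
  assert (Hx : 1 < x) by (unfold x; rewrite <- Rinv_1; apply Rinv_lt_contravar; lra).
  assert (Hs : 0 <= s) by apply sqrt_pos.
  assert (Hs2 : s * s = x ^ 2 - 1) by (apply sqrt_sqrt; nra).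
  unfold cosh. rewrite exp_Ropp, exp_ln by lra.
  replace (/ (x + s)) with (x - s) by (field_simplify_eq; [simpl; lra | lra]).
  lra.
Qed.

Definition sigma_rate (k : R) : R := PI / 2 / (sqrt (1 - k ^ 2) * ellK k).

Lemma sigma_k_ge_rate kk r : 0 <= kk -> 0 <= r -> kk * cosh r < 1 ->
  r * sigma_rate kk <= sigma_k kk r.
Proof.
  intros Hkk Hr Hcr.
  assert (Hrad : forall t, 0 <= t <= r ->
            0 < 1 - kk ^ 2 * cosh t ^ 2 /\ 1 - kk ^ 2 * cosh t ^ 2 <= 1 - kk ^ 2).
  { intros t Ht. pose proof (cosh_ge_1 t (proj1 Ht)). pose proof (cosh_le t r Ht).
    assert (Hkc : kk <= kk * cosh t < 1) by (split; nra).
    replace (kk ^ 2 * cosh t ^ 2) with ((kk * cosh t) ^ 2) by ring.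
    split; [| apply Rplus_le_compat_l, Ropp_le_contravar, pow_incr]; nra. }
  assert (Hkk1 : 0 < 1 - kk ^ 2) by (destruct (Hrad 0) as [H0 _]; [lra | rewrite cosh_0 in H0; lra]).
  set (h := fun t => / sqrt (1 - kk ^ 2 * cosh t ^ 2)).
  assert (Hint : ex_RInt h 0 r).
  { apply (ex_RInt_continuous (V := R_CompleteNormedModule)). intros t Ht.
    rewrite Rmin_left, Rmax_right in Ht by lra.
    destruct (Hrad t Ht) as [Hpos _].
    apply (ex_derive_continuous (V := R_NormedModule)). unfold h, cosh in *.
    auto_derive. simpl in Hpos. split; [lra | split; [apply Rgt_not_eq, sqrt_lt_R0; lra | easy]]. }
  assert (Hlb : r * / sqrt (1 - kk ^ 2) <= RInt h 0 r).
  { replace (r * / sqrt (1 - kk ^ 2)) with (RInt (fun _ => / sqrt (1 - kk ^ 2)) 0 r)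
      by (rewrite RInt_const_R; lra).
    apply RInt_le; [easy | apply ex_RInt_const | easy |].
    intros t Ht. destruct (Hrad t ltac:(lra)). now apply Rinv_sqrt_le_contravar. }
  assert (0 < sqrt (1 - kk ^ 2)) by now apply sqrt_lt_R0.
  pose proof (ellK_ge_PI2 kk ltac:(lra)). pose proof PI_RGT_0.
  unfold sigma_k, sigma_rate. fold h.
  apply (Rle_trans _ (2 * PI / (4 * ellK kk) * (r * / sqrt (1 - kk ^ 2)))).
  - right. field. lra.
  - apply Rmult_le_compat_l; [left; apply Rdiv_lt_0_compat; lra | easy].
Qed.

Lemma sqrt_compl_mul_ell_integrand_le e k t : 0 <= e <= k -> k ^ 2 < 1 ->
  sqrt (1 - k ^ 2) * ell_integrand k t <= sqrt (1 - e ^ 2) * ell_integrand e t.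
Proof.
  intros He Hk. assert (Hek : e ^ 2 <= k ^ 2) by (apply pow_incr; lra).
  pose proof (ell_radicand_pos k t Hk) as Hk_t.
  pose proof (ell_radicand_pos e t ltac:(lra)) as He_t.
  pose proof (sin_pow2_le_1 t). pose proof (pow2_ge_0 (sin t)).
  change (sqrt (1 - k ^ 2) / sqrt (1 - k ^ 2 * sin t ^ 2)
          <= sqrt (1 - e ^ 2) / sqrt (1 - e ^ 2 * sin t ^ 2)).
  rewrite <- !sqrt_div_alt by easy.
  apply sqrt_le_1_alt, Rdiv_le_div_cross; [easy | easy | nra].
Qed.

Lemma sqrt_compl_mul_ellK_le e k : 0 <= e <= k -> k ^ 2 < 1 ->
  sqrt (1 - k ^ 2) * ellK k <= sqrt (1 - e ^ 2) * ellK e.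
Proof.
  intros He Hk. assert (He1 : e ^ 2 < 1) by nra. pose proof PI_RGT_0.
  rewrite !ellK_RInt, <- !RInt_scal_R by now apply ex_RInt_ell_integrand.
  apply RInt_le; [lra | now apply ex_RInt_scal_R, ex_RInt_ell_integrand .. |].
  intros t _. now apply sqrt_compl_mul_ell_integrand_le.
Qed.

Lemma sqrt_compl_mul_ellK_lt_PI2 k : 0 < k ^ 2 < 1 -> sqrt (1 - k ^ 2) * ellK k < PI / 2.
Proof.
  intros Hk. pose proof PI_RGT_0.
  replace (PI / 2) with (RInt (fun _ => 1) 0 (PI / 2)) by (rewrite RInt_const_R; lra).
  rewrite ellK_RInt, <- RInt_scal_R by (apply ex_RInt_ell_integrand; lra).
  apply RInt_lt; [lra | intros; apply continuous_const | |].
  - intros t _. apply (continuous_scal_r (K := R_AbsRing) (V := R_NormedModule)).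
    apply ell_integrand_continuous. lra.
  - intros t Ht.
    assert (Hsin : sin t ^ 2 < 1).
    { pose proof (cos_gt_0 t ltac:(lra) ltac:(lra)).
      rewrite <- (sin2_cos2 t). unfold Rsqr. nra. }
    pose proof (ell_radicand_pos k t ltac:(lra)).
    assert (Hlt : sqrt (1 - k ^ 2) < sqrt (1 - k ^ 2 * sin t ^ 2)) by (apply sqrt_lt_1_alt; nra).
    assert (0 < sqrt (1 - k ^ 2 * sin t ^ 2)) by now apply sqrt_lt_R0.
    unfold ell_integrand.
    apply (Rmult_lt_reg_r (sqrt (1 - k ^ 2 * sin t ^ 2))); [easy |].
    rewrite Rmult_assoc, Rinv_l, Rmult_1_r, Rmult_1_l; lra.
Qed.

Lemma sigma_rate_gt_1 k : 0 < k ^ 2 < 1 -> 1 < sigma_rate k.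
Proof.
  intros Hk. pose proof (sqrt_compl_mul_ellK_lt_PI2 k Hk).
  pose proof (ellK_ge_PI2 k ltac:(lra)). pose proof PI_RGT_0.
  assert (0 < sqrt (1 - k ^ 2)) by (apply sqrt_lt_R0; lra).
  unfold sigma_rate. apply Rlt_div_r; nra.
Qed.

Lemma sigma_rate_le e k : 0 <= e <= k -> k ^ 2 < 1 -> sigma_rate e <= sigma_rate k.
Proof.
  intros He Hk. pose proof (sqrt_compl_mul_ellK_le e k He Hk).
  assert (He1 : e ^ 2 < 1) by nra.
  pose proof (ellK_ge_PI2 k Hk). pose proof PI_RGT_0.
  assert (0 < sqrt (1 - k ^ 2)) by (apply sqrt_lt_R0; lra).
  unfold sigma_rate, Rdiv. apply Rmult_le_compat_l; [lra |].
  apply Rinv_le_contravar; [nra | easy].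
Qed.

Lemma rho_lt_sigma_k kk k : 0 < kk < k -> k < 1 ->
  rho k < sigma_k kk (rho k) - rho k * ((sigma_rate kk - 1) / 2).
Proof.
  intros Hkk Hk. pose proof (rho_pos k ltac:(lra)).
  assert (Hcosh : kk * cosh (rho k) < 1).
  { rewrite cosh_rho by lra. apply (Rmult_lt_reg_r k); [lra |].
    rewrite Rmult_assoc, Rinv_l; lra. }
  pose proof (sigma_k_ge_rate kk (rho k) ltac:(lra) ltac:(lra) Hcosh).
  pose proof (sigma_rate_gt_1 kk ltac:(split; nra)).
  nra.
Qed.

Theorem proposition9 (a b : R) (lamq : nat -> R)
  (hb : 0 < b) (hba : b < a)
  (hlam : forall q : nat, (3 <= q)%nat -> is_lambda_q a b q (lamq q)) :
  let kq := fun q : nat => k_lam a b (lamq q) in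
  let e0 := ecc a b in
  exists (kappa : nat -> R) (kstar : R),
    0 < kstar /\
    (forall m : nat, (3 <= m)%nat -> kappa (S m) <= kappa m) /\
    (forall m : nat, (3 <= m)%nat -> kstar <= kappa m) /\
    (forall m j : nat, (3 <= j)%nat -> (j < m)%nat ->
       rho (kq j) < sigma_k (kq m) (rho (kq j)) - rho (kq j) * kappa m) /\
    (forall j : nat, (3 <= j)%nat ->
       rho (kq j) < sigma_k e0 (rho (kq j)) - rho (kq j) * kstar).
Proof.
  intros kq e0. assert (Hab : 0 < b < a) by lra.
  assert (Hl : forall q, (3 <= q)%nat -> 0 < lamq q < b) by (intros q Hq; apply (hlam q Hq)).
  assert (He0 : 0 < e0) by (unfold e0; rewrite ecc_eq_k_lam_0 by lra; apply k_lam_pos; lra).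
  assert (Hkq : forall q, (3 <= q)%nat -> e0 < kq q < 1).
  { intros q Hq. pose proof (Hl q Hq). unfold e0, kq. rewrite ecc_eq_k_lam_0 by lra.
    split; [apply k_lam_lt | apply k_lam_lt_1]; lra. }
  assert (Hanti : forall j m, (3 <= j)%nat -> (j < m)%nat -> kq m < kq j).
  { intros j m Hj Hjm. pose proof (Hl m ltac:(lia)).
    apply k_lam_lt; [easy | split; [lra |] | apply Hl; lia].
    apply (is_lambda_q_lt a b j m); [easy | lia | easy | apply hlam; lia ..]. }
  exists (fun m => (sigma_rate (kq m) - 1) / 2), ((sigma_rate e0 - 1) / 2).
  repeat split.
  - pose proof (Hkq 3%nat (le_n 3)). pose proof (sigma_rate_gt_1 e0 ltac:(split; nra)). lra.
  - intros m Hm. pose proof (Hkq m Hm). pose proof (Hkq (S m) ltac:(lia)).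
    pose proof (Hanti m (S m) Hm ltac:(lia)).
    pose proof (sigma_rate_le (kq (S m)) (kq m) ltac:(lra) ltac:(nra)). lra.
  - intros m Hm. pose proof (Hkq m Hm).
    pose proof (sigma_rate_le e0 (kq m) ltac:(lra) ltac:(nra)). lra.
  - intros m j Hj Hjm. pose proof (Hkq m ltac:(lia)). pose proof (Hkq j Hj).
    apply rho_lt_sigma_k; [split; [lra | now apply Hanti] | lra].
  - intros j Hj. pose proof (Hkq j Hj). apply rho_lt_sigma_k; lra.
Qed.
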